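(* Let $A=\begin{pmatrix} a & b\\ c & d\end{pmatrix}$ be a positive $2\times 2$ matrix. Define the positive diagonal matrices \[ X=\begin{pmatrix} \sqrt{cd} & 0\\ 0 & \sqrt{ab}\end{pmatrix},\qquad Y=\begin{pmatrix} \left(a\sqrt{cd}+c\sqrt{ab}\right)^{-1} & 0\\ 0 & \left(b\sqrt{cd}+d\sqrt{ab}\right)^{-1}\end{pmatrix}. \] Then the alternate minimization sequence $(A^{(\ell)})_{\ell\ge 0}$ of $A$ converges to the doubly stochastic matrix \[ S(A)=XAY=\begin{pmatrix} \alpha & \beta\\ \beta & \alpha\end{pmatrix},\qquad \alpha=\frac{\sqrt{ad}}{\sqrt{ad}+\sqrt{bc}},\quad \beta=\frac{\sqrt{bc}}{\sqrt{ad}+\sqrt{bc}}. \]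
   Context: A positive matrix has all entries positive. For an $n\times n$ matrix $A=(a_{i,j})$ let $\mathrm{row}_i(A)=\sum_j a_{i,j}$ and $\mathrm{col}_j(A)=\sum_i a_{i,j}$. A matrix is doubly stochastic if all its row sums and all its column sums equal $1$. For positive $A$ let $X(A)=\mathrm{diag}(1/\mathrm{row}_1(A),\ldots,1/\mathrm{row}_n(A))$ and $Y(A)=\mathrm{diag}(1/\mathrm{col}_1(A),\ldots,1/\mathrm{col}_n(A))$. The alternate minimization sequence of $A$ is defined by $A^{(0)}=A$, $A^{(2k+1)}=A^{(2k)}\,Y(A^{(2k)})$ (column scaling) and $A^{(2k+2)}=X(A^{(2k+1)})\,A^{(2k+1)}$ (row scaling) for $k\ge 0$. *)

From HB Require Import structures.
From mathcomp Require Import all_boot all_order all_algebra.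
From mathcomp Require Import all_classical all_reals all_analysis.
Set Implicit Arguments. Unset Strict Implicit. Unset Printing Implicit Defensive.
Import Order.TTheory GRing.Theory Num.Theory.
Local Open Scope ring_scope.

Section Defs.
Variable R : realType.

Definition positive_mx n (A : 'M[R]_n) : Prop := forall i j, 0 < A i j.

Definition row_sum n (A : 'M[R]_n) (i : 'I_n) : R := \sum_(j < n) A i j.
Definition col_sum n (A : 'M[R]_n) (j : 'I_n) : R := \sum_(i < n) A i j.

Definition doubly_stochastic n (A : 'M[R]_n) : Prop :=
  (forall i, row_sum A i = 1) /\ (forall j, col_sum A j = 1).

Definition Xsc n (A : 'M[R]_n) : 'M[R]_n := diag_mx (\row_i (row_sum A i)^-1).
Definition Ysc n (A : 'M[R]_n) : 'M[R]_n := diag_mx (\row_j (col_sum A j)^-1).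

(* alternate minimization sequence:
   A^(0) = A, A^(2k+1) = A^(2k) Y(A^(2k)), A^(2k+2) = X(A^(2k+1)) A^(2k+1) *)
Fixpoint am_seq n (A : 'M[R]_n) (l : nat) : 'M[R]_n :=
  match l with
  | 0 => A
  | l'.+1 => let B := am_seq A l' in
             if odd l' then Xsc B *m B else B *m Ysc B
  end.

Definition mx22 (a b c d : R) : 'M[R]_2 :=
  \matrix_(i < 2, j < 2)
    if (i == 0 :> nat) then (if (j == 0 :> nat) then a else b)
    else (if (j == 0 :> nat) then c else d).

End Defs.

From HB Require Import structures.
From mathcomp Require Import all_boot all_order all_algebra.
From mathcomp Require Import all_classical all_reals all_analysis.
From mathcomp Require Import ring lra.
Import Order.TTheory GRing.Theory Num.Theory.
Import numFieldNormedType.Exports.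
Local Open Scope classical_set_scope.
Local Open Scope ring_scope.

(* After the first column scaling, every odd term of the sequence is diag(u, 1) A
   with its columns normalized, for some ratio u > 0, and the following even term
   is its row normalization.  The next column normalization brings it back to that
   form with u replaced by the Moebius transform
   f(u) = (K u + 2cd) / (2ab u + K),  K = ad + bc.
   The positive fixed point of f is s = sqrt(cd/ab), and f multiplies the Cayley
   coordinate (u - s)/(u + s) by the constant (K - 2ab s)/(K + 2ab s), of modulus
   less than 1; hence u_k -> s.  At u = s the column-normalized matrix already has
   unit row sums, so odd and even terms share the limit, and that limit is X A Y. *)

Lemma cvg_even_odd (T : topologicalType) (x : nat -> T) (L : T) :
  (fun k => x k.*2) @ \oo --> L -> (fun k => x k.*2.+1) @ \oo --> L ->
  x @ \oo --> L.
Proof.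
move=> xe xo U UL; have [N1 _ h1] := xe U UL; have [N2 _ h2] := xo U UL.
exists (N1 + N2).*2 => // n /=; rewrite -geq_half_double => le_n.
rewrite -[n]odd_double_half; case: (odd n); [apply: h2 | apply: h1] => /=.
  exact: leq_trans (leq_addl _ _) le_n.
exact: leq_trans (leq_addr _ _) le_n.
Qed.

Definition mobius {R : fieldType} (p q r t u : R) := (p * u + q) / (r * u + t).

Lemma cvg_mobius (R : numFieldType) (p q r t x : R) (u : nat -> R) :
  r * x + t != 0 -> u @ \oo --> x ->
  (fun k => mobius p q r t (u k)) @ \oo --> mobius p q r t x.
Proof.
move=> rxt0 ux; apply: cvgM; last apply: cvgV => //.
  by apply: cvgD; [exact: cvgM (cvg_cst p) ux | exact: cvg_cst].
by apply: cvgD; [exact: cvgM (cvg_cst r) ux | exact: cvg_cst].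
Qed.

Definition cayley {R : fieldType} (s u : R) := (u - s) / (u + s).

Lemma cayleyK (R : realFieldType) (s u : R) : 0 < s -> 0 < u ->
  mobius s s (-1) 1 (cayley s u) = u.
Proof.
move=> s0 u0; rewrite /mobius /cayley; field.
by apply/andP; split; lra.
Qed.

Lemma cvg_cayley_geometric (R : realType) (s lam : R) (u : nat -> R) :
  0 < s -> `|lam| < 1 -> (forall k, 0 < u k) ->
  (forall k, cayley s (u k.+1) = lam * cayley s (u k)) -> u @ \oo --> s.
Proof.
move=> s0 lam1 u0 contract.
have geom k : cayley s (u k) = lam ^+ k * cayley s (u 0).
  by elim: k => [|k IH]; rewrite ?mul1r // contract IH exprS mulrA.
have -> : u = fun k => mobius s s (-1) 1 (lam ^+ k * cayley s (u 0)).
  by apply: funext => k; rewrite -geom cayleyK.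
rewrite [X in _ --> X](_ : s = mobius s s (-1) 1 0); last first.
  by rewrite /mobius !mulr0 !add0r divr1.
apply: cvg_mobius; first by rewrite mulr0 add0r oner_neq0.
by rewrite -(mul0r (cayley s (u 0))); apply: cvgM; [exact: cvg_expr | exact: cvg_cst].
Qed.

Section AlternateMinimization.
Variable R : realType.

Lemma am_seq_double_odd n (A : 'M[R]_n) k :
  am_seq A k.*2.+1 = am_seq A k.*2 *m Ysc (am_seq A k.*2).
Proof. by rewrite /= odd_double. Qed.

Lemma am_seq_double_even n (A : 'M[R]_n) k :
  am_seq A k.*2.+2 = Xsc (am_seq A k.*2.+1) *m am_seq A k.*2.+1.
Proof. by rewrite /= odd_double. Qed.

Lemma Xsc_row_stochastic n (A : 'M[R]_n) :
  (forall i, row_sum A i = 1) -> Xsc A = 1%:M.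
Proof. by move=> rowA; apply/matrixP => i j; rewrite !mxE rowA invr1. Qed.

End AlternateMinimization.

Lemma sum_ord2 (V : nmodType) (F : 'I_2 -> V) : \sum_(i < 2) F i = F 0 + F 1.
Proof. by rewrite big_ord_recl big_ord1; congr (_ + F _); apply: val_inj. Qed.

Section Matrix22.
Variable R : realType.

Lemma mul_diag_mx22 (x w a b c d y z : R) :
  mx22 x 0 0 w *m mx22 a b c d *m mx22 y 0 0 z =
  mx22 (x * a * y) (x * b * z) (w * c * y) (w * d * z).
Proof.
apply/matrixP => i j; rewrite !mxE !sum_ord2 !mxE !sum_ord2 !mxE.
by case: i => [[|[|i]] ?] //; case: j => [[|[|j]] ?] //=; ring.
Qed.

Lemma cvg_mx22 (x y z w : nat -> R) (x0 y0 z0 w0 : R) :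
  x @ \oo --> x0 -> y @ \oo --> y0 -> z @ \oo --> z0 -> w @ \oo --> w0 ->
  forall i j, (fun k => mx22 (x k) (y k) (z k) (w k) i j) @ \oo --> mx22 x0 y0 z0 w0 i j.
Proof.
move=> xx0 yy0 zz0 ww0 i j; rewrite mxE; under eq_fun do rewrite mxE.
by case: i => [[|[|i]] ?] //; case: j => [[|[|j]] ?].
Qed.

End Matrix22.

Local Ltac pos_neq0 := repeat (apply/andP; split); apply: lt0r_neq0;
  rewrite ?(addr_gt0, mulr_gt0, divr_gt0, exprn_gt0, ltr0n).

Section TwoByTwo.
Context {R : realType}.
Variables (a b c d : R).
Hypotheses (a0 : 0 < a) (b0 : 0 < b) (c0 : 0 < c) (d0 : 0 < d).

Local Notation A := (mx22 a b c d).
Local Notation K := (a * d + b * c).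

(* [col_normal u] is diag(u, 1) A with normalized columns, and [row_normal u]
   is [col_normal u] with normalized rows. *)
Definition col_normal (u : R) : 'M[R]_2 :=
  mx22 (mobius a 0 a c u) (mobius b 0 b d u)
       (mobius 0 c a c u) (mobius 0 d b d u).

Definition row_normal (u : R) : 'M[R]_2 :=
  mx22 (mobius (a * b) (a * d) (2 * a * b) K u)
       (mobius (b * a) (b * c) (2 * a * b) K u)
       (mobius (c * b) (c * d) K (2 * c * d) u)
       (mobius (d * a) (d * c) K (2 * c * d) u).

Definition ratio_step (u : R) : R := mobius K (2 * c * d) (2 * a * b) K u.

Definition ratio_seq (k : nat) : R := iter k ratio_step 1.

Lemma ratio_seq_gt0 k : 0 < ratio_seq k.
Proof.
elim: k => [|k IH] /=; first exact: ltr01.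
by rewrite /ratio_step /mobius ?(divr_gt0, addr_gt0, mulr_gt0, ltr0n).
Qed.

Lemma col_normalize_A : A *m Ysc A = col_normal 1.
Proof.
rewrite /Ysc mul_mx_diag; apply/matrixP => i j.
rewrite !mxE /col_sum sum_ord2 !mxE /mobius.
by case: i => [[|[|i]] ?] //; case: j => [[|[|j]] ?] //=; field; pos_neq0.
Qed.

Lemma row_normalize_col_normal u : 0 < u ->
  Xsc (col_normal u) *m col_normal u = row_normal u.
Proof.
move=> u0; rewrite /Xsc mul_diag_mx; apply/matrixP => i j.
rewrite !mxE /row_sum sum_ord2 !mxE /mobius.
by case: i => [[|[|i]] ?] //; case: j => [[|[|j]] ?] //=; field; pos_neq0.
Qed.

Lemma col_normalize_row_normal u : 0 < u ->
  row_normal u *m Ysc (row_normal u) = col_normal (ratio_step u).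
Proof.
move=> u0; rewrite /Ysc mul_mx_diag; apply/matrixP => i j.
rewrite !mxE /col_sum sum_ord2 !mxE /ratio_step /mobius.
by case: i => [[|[|i]] ?] //; case: j => [[|[|j]] ?] //=; field; pos_neq0.
Qed.

Lemma am_seq_odd k : am_seq A k.*2.+1 = col_normal (ratio_seq k).
Proof.
elim: k => [|k IH]; first exact: col_normalize_A.
rewrite am_seq_double_odd doubleS am_seq_double_even IH.
by rewrite row_normalize_col_normal ?col_normalize_row_normal ?ratio_seq_gt0.
Qed.

Lemma am_seq_even k : am_seq A k.*2.+2 = row_normal (ratio_seq k).
Proof.
by rewrite am_seq_double_even am_seq_odd row_normalize_col_normal ?ratio_seq_gt0.
Qed.

Lemma cvg_col_normal (u : nat -> R) (x : R) : 0 < x -> u @ \oo --> x ->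
  forall i j, (fun k => col_normal (u k) i j) @ \oo --> col_normal x i j.
Proof. by move=> x0 ux; apply: cvg_mx22; apply: cvg_mobius ux; pos_neq0. Qed.

Lemma cvg_row_normal (u : nat -> R) (x : R) : 0 < x -> u @ \oo --> x ->
  forall i j, (fun k => row_normal (u k) i j) @ \oo --> row_normal x i j.
Proof. by move=> x0 ux; apply: cvg_mx22; apply: cvg_mobius ux; pos_neq0. Qed.

Variable s : R.
Hypotheses (s0 : 0 < s) (ab_s2 : a * b * s ^+ 2 = c * d).

Local Notation lam := ((K - 2 * a * b * s) / (K + 2 * a * b * s)).

Lemma cayley_ratio_step u : 0 < u -> cayley s (ratio_step u) = lam * cayley s u.
Proof.
move=> u0; rewrite /cayley /ratio_step /mobius -mulrA -ab_s2.
by field; pos_neq0.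
Qed.

Lemma norm_lam_lt1 : `|lam| < 1.
Proof.
have K0 : 0 < K by rewrite ?(addr_gt0, mulr_gt0).
have abs0 : 0 < 2 * a * b * s by rewrite ?(mulr_gt0, ltr0n).
have K_abs0 : 0 < K + 2 * a * b * s by rewrite addr_gt0.
rewrite normrM normfV (gtr0_norm K_abs0) ltr_pdivrMr // mul1r ltr_norml.
by apply/andP; split; lra.
Qed.

Lemma ratio_seq_cvg : ratio_seq @ \oo --> s.
Proof.
apply: cvg_cayley_geometric s0 norm_lam_lt1 ratio_seq_gt0 _ => k.
exact: cayley_ratio_step (ratio_seq_gt0 k).
Qed.

Lemma col_normal_doubly_stochastic : doubly_stochastic (col_normal s).
Proof.
have d_eq : d = a * b * s ^+ 2 / c by rewrite ab_s2 mulrC mulKf ?lt0r_neq0.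
split=> i; rewrite /row_sum /col_sum sum_ord2 !mxE /mobius;
  case: i => [[|[|i]] ?] //=; rewrite ?d_eq; by field; pos_neq0.
Qed.

Lemma row_normal_fixed : row_normal s = col_normal s.
Proof.
have [rows1 _] := col_normal_doubly_stochastic.
by rewrite -row_normalize_col_normal // Xsc_row_stochastic // mul1mx.
Qed.

Lemma am_seq_cvg i j : (fun l => am_seq A l i j) @ \oo --> col_normal s i j.
Proof.
rewrite -cvg_shiftS; apply: cvg_even_odd; rewrite /mk_sequence.
  under eq_fun do rewrite am_seq_odd.
  exact: cvg_col_normal s0 ratio_seq_cvg i j.
under eq_fun do rewrite am_seq_even.
rewrite -row_normal_fixed; exact: cvg_row_normal s0 ratio_seq_cvg i j.
Qed.

End TwoByTwo.

Lemma gt0_sqr_ex (R : rcfType) (x : R) : 0 < x -> exists2 r, 0 < r & x = r ^+ 2.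
Proof. by move=> x0; exists (Num.sqrt x); rewrite ?sqrtr_gt0 ?sqr_sqrtr ?ltW. Qed.

Theorem theorem4 (R : realType) (a b c d : R) :
  0 < a -> 0 < b -> 0 < c -> 0 < d ->
  let A := mx22 a b c d in
  let X := mx22 (Num.sqrt (c * d)) 0 0 (Num.sqrt (a * b)) in
  let Y := mx22 (a * Num.sqrt (c * d) + c * Num.sqrt (a * b))^-1 0 0
                (b * Num.sqrt (c * d) + d * Num.sqrt (a * b))^-1 in
  let alpha := Num.sqrt (a * d) / (Num.sqrt (a * d) + Num.sqrt (b * c)) in
  let beta := Num.sqrt (b * c) / (Num.sqrt (a * d) + Num.sqrt (b * c)) in
  let S := X *m A *m Y in
  [/\ S = mx22 alpha beta beta alpha,
      doubly_stochastic S &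
      forall i j : 'I_2, (fun l => am_seq A l i j) @ \oo --> S i j].
Proof.
(* Writing the entries as squares turns every square root into a monomial. *)
move=> /gt0_sqr_ex[ra ra0 ->] /gt0_sqr_ex[rb rb0 ->].
move=> /gt0_sqr_ex[rc rc0 ->] /gt0_sqr_ex[rd rd0 ->].
rewrite -!exprMn !sqrtr_sqr !gtr0_norm ?mulr_gt0 // => A X Y alpha beta S.
have [a0 b0 c0 d0] : [/\ 0 < ra ^+ 2, 0 < rb ^+ 2, 0 < rc ^+ 2 & 0 < rd ^+ 2].
  by split; apply: exprn_gt0.
set s := rc * rd / (ra * rb).
have s0 : 0 < s by rewrite divr_gt0 ?mulr_gt0.
have ab_s2 : ra ^+ 2 * rb ^+ 2 * s ^+ 2 = rc ^+ 2 * rd ^+ 2.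
  by rewrite /s; field; pos_neq0.
have -> : S = col_normal (ra ^+ 2) (rb ^+ 2) (rc ^+ 2) (rd ^+ 2) s.
  rewrite /S /X /A /Y mul_diag_mx22 /col_normal /s /mobius.
  by congr mx22; field; pos_neq0.
split; last exact: am_seq_cvg.
  by rewrite /col_normal /alpha /beta /s /mobius; congr mx22; field; pos_neq0.
exact: col_normal_doubly_stochastic.
Qed.
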